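(* Let $V$ be a finite set of units, $\Theta=(\theta(i,j))_{i,j\in V}$ with $\theta(i,j)>0$, $\mathcal{M}$ a finite set of valid redistricting maps of $V$ into $k$ districts, and $\mathcal{D}$ a distribution on $\mathcal{M}$ with population centroid $A_c(i,j)=\mathbb{E}_{A'\sim\mathcal{D}}[A'(i,j)]$. A population medoid is a map $A^*\in\arg\min_{A\in\mathcal{M}}\mathbb{E}_{A'\sim\mathcal{D}}[d_\Theta(A,A')]$. Then the population medoids are exactly the solutions of the constrained min $k$-cut problem \[\min_{A\in\mathcal{M}}\ \sum_{i,j\in V} s(i,j)\,B_A(i,j),\qquad s(i,j)=\tfrac{1}{2}\theta(i,j)\big(2A_c(i,j)-1\big),\] where $B_A(i,j)=1-A(i,j)$ equals $1$ iff $i$ and $j$ lie in different districts of the map $A$; that is, a population medoid can be obtained by solving this min $k$-cut problem whose feasible partitions are constrained to be valid redistricting maps.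
   Context: A redistricting map is a partition of $V$ (the vertex set of a graph modeling a state) into $k$ nonempty pairwise disjoint districts; valid maps satisfy a fixed set of constraints (e.g. contiguity, equal population, compactness). A map is identified with its adjacency matrix $A$, $A(i,j)=1$ iff $i,j$ are in the same district and $0$ otherwise. $d_\Theta(A_1,A_2)=\frac{1}{2}\sum_{i,j\in V}\theta(i,j)|A_1(i,j)-A_2(i,j)|$, summing over ordered pairs. *)

From HB Require Import structures.
From mathcomp Require Import all_boot all_order all_algebra.
Set Implicit Arguments. Unset Strict Implicit. Unset Printing Implicit Defensive.
Import Order.TTheory GRing.Theory Num.Theory.
Local Open Scope ring_scope.

(* A redistricting map of V into k districts: a partition of [set: V] into
   k nonempty pairwise disjoint blocks (mathcomp's [partition] excludes set0). *)
Definition district_map (V : finType) (k : nat) (P : {set {set V}}) : bool :=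
  partition P [set: V] && (#|P| == k)%N.

Definition adj (R : nzRingType) (V : finType) (P : {set {set V}}) (i j : V) : R :=
  (pblock P i == pblock P j)%:R.

Definition dTheta (R : realFieldType) (V : finType) (theta : V -> V -> R)
  (P1 P2 : {set {set V}}) : R :=
  2^-1 * \sum_(i : V) \sum_(j : V) theta i j * `|adj R P1 i j - adj R P2 i j|.

Definition expect (R : realFieldType) (V : finType) (M : {set {set {set V}}})
  (mu : {set {set V}} -> R) (f : {set {set V}} -> R) : R :=
  \sum_(P in M) mu P * f P.

Definition is_distribution (R : realFieldType) (V : finType)
  (M : {set {set {set V}}}) (mu : {set {set V}} -> R) : Prop :=
  (forall P, 0 <= mu P) /\ (forall P, P \notin M -> mu P = 0) /\
  \sum_(P in M) mu P = 1.

Definition centroid (R : realFieldType) (V : finType) (M : {set {set {set V}}})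
  (mu : {set {set V}} -> R) (i j : V) : R :=
  expect M mu (fun P => adj R P i j).

Definition is_medoid (R : realFieldType) (V : finType) (theta : V -> V -> R)
  (M : {set {set {set V}}}) (mu : {set {set V}} -> R) (A : {set {set V}}) : Prop :=
  A \in M /\ forall B, B \in M ->
    expect M mu (dTheta theta A) <= expect M mu (dTheta theta B).

Definition cut_weight (R : realFieldType) (V : finType) (theta : V -> V -> R)
  (M : {set {set {set V}}}) (mu : {set {set V}} -> R) (i j : V) : R :=
  2^-1 * theta i j * (2 * centroid M mu i j - 1).

Definition cut_objective (R : realFieldType) (V : finType) (theta : V -> V -> R)
  (M : {set {set {set V}}}) (mu : {set {set V}} -> R) (A : {set {set V}}) : R :=
  \sum_(i : V) \sum_(j : V) cut_weight theta M mu i j * (1 - adj R A i j).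

Definition solves_min_kcut (R : realFieldType) (V : finType) (theta : V -> V -> R)
  (M : {set {set {set V}}}) (mu : {set {set V}} -> R) (A : {set {set V}}) : Prop :=
  A \in M /\ forall B, B \in M ->
    cut_objective theta M mu A <= cut_objective theta M mu B.

From HB Require Import structures.
From mathcomp Require Import all_boot all_order all_algebra ring.
Import Order.TTheory GRing.Theory Num.Theory.
Local Open Scope ring_scope.

(* On 0/1 values [|a - b| = a + b - 2ab], so [d_Theta(A, A')] is affine in the
   adjacency matrix of [A'] and its expectation only sees the centroid [A_c]:
   [E d_Theta(A, A') = sum s(i,j) B_A(i,j) + 1/2 sum theta(i,j) (1 - A_c(i,j))].
   The second term does not depend on [A], so both problems have the same
   minimisers. *)

Lemma normB_bool (R : numDomainType) (a b : bool) :
  `|a%:R - b%:R| = a%:R + b%:R - 2 * (a%:R * b%:R) :> R.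
Proof.
by case: a; case: b;
  rewrite /= ?subrr ?subr0 ?sub0r ?normrN ?normr1 ?normr0 ?mulr1 ?mulr0; ring.
Qed.

Section Expectation.

Variables (R : realFieldType) (V : finType).
Variables (M : {set {set {set V}}}) (mu : {set {set V}} -> R).

Lemma expect_sum (I : finType) (F : I -> {set {set V}} -> R) :
  expect M mu (fun P => \sum_i F i P) = \sum_i expect M mu (F i).
Proof.
rewrite /expect exchange_big; apply: eq_bigr => i _.
by rewrite mulr_sumr.
Qed.

Lemma expectZ (c : R) (f : {set {set V}} -> R) :
  expect M mu (fun P => c * f P) = c * expect M mu f.
Proof.
by rewrite /expect mulr_sumr; apply: eq_bigr => P _; rewrite mulrCA.
Qed.

Hypothesis mu_mass1 : \sum_(P in M) mu P = 1.

Lemma expect_adj_distance (A : {set {set V}}) (i j : V) :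
  expect M mu (fun P => `|adj R A i j - adj R P i j|) =
  adj R A i j + centroid M mu i j - 2 * (adj R A i j * centroid M mu i j).
Proof.
rewrite /centroid /expect.
under eq_bigr do rewrite /adj normB_bool mulrBr mulrDr.
rewrite sumrB big_split /= -big_distrl /= mu_mass1 mul1r /adj.
congr (_ + _ - _); rewrite !big_distrr /=; apply: eq_bigr => P _; ring.
Qed.

Variable theta : V -> V -> R.

Definition cut_offset : R :=
  \sum_i \sum_j 2^-1 * theta i j * (1 - centroid M mu i j).

Lemma expect_dTheta (A : {set {set V}}) :
  expect M mu (dTheta theta A) = cut_objective theta M mu A + cut_offset.
Proof.
rewrite /dTheta expectZ expect_sum.
under eq_bigr do rewrite expect_sum.
rewrite /cut_objective /cut_offset -big_split mulr_sumr /=.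
apply: eq_bigr => i _; rewrite -big_split mulr_sumr /=; apply: eq_bigr => j _.
rewrite expectZ expect_adj_distance /cut_weight; ring.
Qed.

End Expectation.

Theorem theorem2 (R : realFieldType) (V : finType) (k : nat)
  (theta : V -> V -> R) (M : {set {set {set V}}}) (mu : {set {set V}} -> R) :
  (forall i j, 0 < theta i j) ->
  (forall P, P \in M -> district_map k P) ->
  is_distribution M mu ->
  forall A : {set {set V}},
    is_medoid theta M mu A <-> solves_min_kcut theta M mu A.
Proof.
move=> _ _ [_ [_ mu_mass1]] A.
have lerE B C : (expect M mu (dTheta theta B) <= expect M mu (dTheta theta C))
              = (cut_objective theta M mu B <= cut_objective theta M mu C).
  by rewrite !expect_dTheta // lerD2r.
by split=> -[AM Amin]; split=> // B BM; [rewrite -lerE | rewrite lerE]; apply: Amin.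
Qed.
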